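(* Let $(V,Y,\mathbf 1,\omega)$ be a vertex operator algebra of central charge $c\ne0$. Then $g(V)_{\ge0}W=W$ for every weak $V$-module $W$; in particular $g(V)_{\ge0}V=V$.
   Context: A weak $V$-module is a module for $V$ regarded as a vertex algebra. For a weak module $W$, $g(V)_{\ge0}W=\mathrm{span}\{v_nw\mid v\in V,\ n\ge0,\ w\in W\}$, where $Y_W(v,x)=\sum_nv_nx^{-n-1}$. *)

(* Vertex operator algebras and weak modules, following
   Lepowsky--Li, written in terms of modes: Y u n v = u_n v, i.e.
   Y(u,x)v = \sum_n u_n v x^{-n-1}. *)
From mathcomp Require Import all_boot all_algebra.
From mathcomp Require Import reals.
From mathcomp.real_closed Require Import complex.
Set Implicit Arguments. Unset Strict Implicit. Unset Printing Implicit Defensive.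
Import GRing.Theory Num.Theory.
Local Open Scope ring_scope.

Definition gbin (l : int) (i : nat) : int :=
  match l with
  | Posz k => ('C(k, i))%:Z
  | Negz k => (-1) ^+ i * ('C(k + i, i))%:Z
  end.

Section VOA.
Variable K : fieldType.
Variable V : lmodType K.

Definition bilinear_modes (W : lmodType K) (YW : V -> int -> W -> W) : Prop :=
  (forall (n : int) (a : K) (u1 u2 : V) (w : W),
      YW (a *: u1 + u2) n w = a *: YW u1 n w + YW u2 n w) /\
  (forall (n : int) (a : K) (u : V) (w1 w2 : W),
      YW u n (a *: w1 + w2) = a *: YW u n w1 + YW u n w2).

Definition truncation (W : lmodType K) (YW : V -> int -> W -> W) : Prop :=
  forall (u : V) (w : W), exists N : int, forall n : int, N <= n -> YW u n w = 0.

Definition vacuum_property (W : lmodType K) (vac : V) (YW : V -> int -> W -> W)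
  : Prop :=
  forall (n : int) (w : W), YW vac n w = if n == -1 then w else 0.

(* The Jacobi identity, written in its equivalent component form
   (Borcherds identity): for all m n l,
   \sum_{i>=0} binom(m,i) (u_{l+i} v)_{m+n-i} w
   = \sum_{i>=0} (-1)^i binom(l,i)
        (u_{m+l-i} v_{n+i} w - (-1)^l v_{n+l-i} u_{m+i} w);
   both sums are finite by truncation, so equality of the sums is expressed
   as eventual equality of the (stabilizing) partial sums. *)
Definition jacobi_identity (Y : V -> int -> V -> V) (W : lmodType K)
  (YW : V -> int -> W -> W) : Prop :=
  forall (u v : V) (w : W) (m n l : int),
    exists N0 : nat, forall N : nat, (N0 <= N)%N ->
      \sum_(i < N) (gbin m i)%:~R *: YW (Y u (l + i%:Z) v) (m + n - i%:Z) w
      = \sum_(i < N) ((-1) ^+ i * gbin l i)%:~R *: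
           (YW u (m + l - i%:Z) (YW v (n + i%:Z) w)
            - (-1) ^ l *: YW v (n + l - i%:Z) (YW u (m + i%:Z) w)).

Definition is_weak_module (Y : V -> int -> V -> V) (vac : V)
  (W : lmodType K) (YW : V -> int -> W -> W) : Prop :=
  [/\ bilinear_modes YW, truncation YW, vacuum_property vac YW
    & jacobi_identity Y YW].

Definition Lop (Y : V -> int -> V -> V) (om : V) (n : int) : V -> V :=
  Y om (n + 1).

Definition homog (Y : V -> int -> V -> V) (om : V) (n : int) (v : V) : Prop :=
  Lop Y om 0 v = n%:~R *: v.

(* vertex operator algebra (Lepowsky--Li Def. 3.1.22) of central charge c;
   the Z-grading V = \oplus_n V_(n) is the L(0)-eigenspace decomposition *)
Definition is_VOA (Y : V -> int -> V -> V) (vac om : V) (c : K) : Prop :=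
  [/\ is_weak_module Y vac Y,
    (forall (u : V) (n : int), 0 <= n -> Y u n vac = 0) /\
    (forall u : V, Y u (-1) vac = u),
    (forall (m n : int) (v : V),
       Lop Y om m (Lop Y om n v) - Lop Y om n (Lop Y om m v)
       = (m - n)%:~R *: Lop Y om (m + n) v
         + (if m + n == 0 then ((m ^+ 3 - m)%:~R / 12%:R * c) *: v else 0)),
    (* L(-1)-derivative property: Y(L(-1)u,x) = d/dx Y(u,x) *)
    (forall (u : V) (n : int) (w : V),
       Y (Lop Y om (-1) u) n w = - (n%:~R) *: Y u (n - 1) w) &
    [/\ homog Y om 2 om,
        (forall v : V, exists s : seq (int * V),
            (forall p, p \in s -> homog Y om p.1 p.2) /\
            v = \sum_(p <- s) p.2),
        (forall n : int, exists b : seq V, forall v : V, homog Y om n v ->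
            exists coef : nat -> K, v = \sum_(i < size b) coef i *: b`_i)
      & (exists N : int, forall (n : int) (v : V), n < N -> homog Y om n v ->
            v = 0)]].

(* w \in g(V)_{>=0} W = span { v_n w' | v \in V, n >= 0, w' \in W } *)
Definition in_g_ge0 (W : lmodType K) (YW : V -> int -> W -> W) (w : W) : Prop :=
  exists s : seq (K * V * int * W),
    (forall t, t \in s -> 0 <= t.1.2) /\
    w = \sum_(t <- s) t.1.1.1 *: YW t.1.1.2 t.1.2 t.2.

End VOA.

(* Since L(k)1 = 0 for k >= -1, the Virasoro relations give
   L(k)omega = [L(k), L(-2)]1, i.e. omega_3 omega = (c/2) 1 and omega_n omega = 0
   for n > 3.  The Jacobi identity with u = v = omega, l = 3 and m so large that
   omega_j w = 0 for j >= m then reads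
     (c/2) w = (omega_3 omega)_{-1} w
             = \sum_{i <= 3} (-1)^i binom(3,i) omega_{m+3-i} omega_{i-1-m} w,
   where every outer mode omega_{m+3-i} is nonnegative.  As c != 0, w lies in
   g(V)_{>=0} W. *)
From mathcomp Require Import all_boot all_algebra.
From mathcomp Require Import reals.
From mathcomp.real_closed Require Import complex.
From mathcomp Require Import order.
Set Implicit Arguments. Unset Strict Implicit. Unset Printing Implicit Defensive.
Import Order.TTheory GRing.Theory Num.Theory.
Local Open Scope ring_scope.

Section Modes.
Variables (K : fieldType) (V W : lmodType K) (YW : V -> int -> W -> W).

Lemma in_g_ge0_0 : in_g_ge0 YW 0.
Proof. by exists [::]; split => //; rewrite big_nil. Qed.

Lemma in_g_ge0D x y : in_g_ge0 YW x -> in_g_ge0 YW y -> in_g_ge0 YW (x + y).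
Proof.
move=> [s1 [H1 ->]] [s2 [H2 ->]]; exists (s1 ++ s2); split; last by rewrite big_cat.
by move=> t; rewrite mem_cat => /orP [/H1|/H2].
Qed.

Lemma in_g_ge0Z a x : in_g_ge0 YW x -> in_g_ge0 YW (a *: x).
Proof.
move=> [s [H ->]].
exists [seq (a * t.1.1.1, t.1.1.2, t.1.2, t.2) | t <- s]; split.
  by move=> t /mapP [t' /H Ht' ->].
by rewrite big_map scaler_sumr; apply: eq_bigr => t _; rewrite scalerA.
Qed.

Lemma in_g_ge0_mode u k w : 0 <= k -> in_g_ge0 YW (YW u k w).
Proof.
move=> k_ge0; exists [:: (1, u, k, w)]; split; first by move=> t /[1!inE] /eqP ->.
by rewrite big_seq1 scale1r.
Qed.

Lemma in_g_ge0_sum (I : Type) (r : seq I) (F : I -> W) :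
  (forall i, in_g_ge0 YW (F i)) -> in_g_ge0 YW (\sum_(i <- r) F i).
Proof.
move=> gF; apply: (big_ind (in_g_ge0 YW)) => //.
- exact: in_g_ge0_0.
- exact: in_g_ge0D.
Qed.

Hypothesis YW_bilinear : bilinear_modes YW.

Lemma modes0l n w : YW 0 n w = 0.
Proof.
have := YW_bilinear.1 n 1 0 0 w; rewrite !scale1r addr0 => E.
by apply: (addrI (YW 0 n w)); rewrite addr0 -E.
Qed.

Lemma modes0r u n : YW u n 0 = 0.
Proof.
have := YW_bilinear.2 n 1 u 0 0; rewrite !scale1r addr0 => E.
by apply: (addrI (YW u n 0)); rewrite addr0 -E.
Qed.

Lemma modesZl a u n w : YW (a *: u) n w = a *: YW u n w.
Proof. by have := YW_bilinear.1 n a u 0 w; rewrite addr0 modes0l addr0. Qed.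

End Modes.

Section GeneratedByNonnegativeModes.
Variables (K : fieldType) (V : lmodType K) (Y : V -> int -> V -> V) (vac : V).

(* If u_p v is a multiple a 1 of the vacuum and all higher modes u_{p+i} v vanish,
   the Jacobi identity expresses a w through nonnegative modes of u. *)
Lemma scale_in_g_ge0 (W : lmodType K) (YW : V -> int -> W -> W) (u v : V)
    (p : nat) (a : K) :
  is_weak_module Y vac YW ->
  Y u p%:Z v = a *: vac -> (forall i : nat, (0 < i)%N -> Y u (p%:Z + i%:Z) v = 0) ->
  forall w : W, in_g_ge0 YW (a *: w).
Proof.
move=> [BW TW VW JW] upv uv_gt w.
have [N uw0] := TW u w.
pose m : nat := `|N|%N.
have N_le_m : N <= m%:Z by rewrite /m abszE ler_norm.
have [N0 jac] := JW u v w m%:Z (-1 - m%:Z) p%:Z.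
have := jac N0.+1 (leqnSn _); rewrite big_ord_recl big1 ?addr0; last first.
  by move=> i _; rewrite uv_gt // modes0l // scaler0.
rewrite [m%:Z + _]addrC subrK /gbin bin0 scale1r upv modesZl // VW eqxx.
move=> ->; apply: in_g_ge0_sum => i.
have -> : YW u (m%:Z + i%:Z) w = 0.
  by apply: uw0; apply: (le_trans N_le_m); rewrite lerDl.
rewrite modes0r // scaler0 subr0.
have [i_le_p | p_lt_i] := leqP i p.
  by apply/in_g_ge0Z/in_g_ge0_mode; rewrite -addrA addr_ge0 // subr_ge0 lez_nat.
by rewrite bin_small // mulr0 scale0r; apply: in_g_ge0_0.
Qed.

End GeneratedByNonnegativeModes.

Section VirasoroVector.
Variables (K : fieldType) (V : lmodType K) (Y : V -> int -> V -> V) (vac om : V).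
Variable c : K.
Hypothesis VOA : is_VOA Y vac om c.

Lemma Lop_vac k : -1 <= k -> Lop Y om k vac = 0.
Proof.
case: VOA => _ [creation _] _ _ _ k_ge.
by rewrite /Lop creation //; rewrite -(lerD2r 1) in k_ge.
Qed.

(* omega = L(-2)1, so L(k)omega = [L(k), L(-2)]1 for k >= -1. *)
Lemma Lop_omega k : 1 <= k ->
  Lop Y om k om = (if k == 2 then (6%:R / 12%:R * c) *: vac else 0).
Proof.
case: (VOA) => [[BV _ _ _] [_ vac_create] vir _ _] k_ge1.
have omE : Lop Y om (-2) vac = om by rewrite /Lop vac_create.
have := vir k (-2) vac.
have k_ge : -1 <= k by apply: le_trans k_ge1.
have k2_ge : -1 <= k - 2 by rewrite lerBrDr.
rewrite omE (Lop_vac k_ge) {2}/Lop modes0r // subr0 opprK (Lop_vac k2_ge).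
rewrite scaler0 add0r subr_eq0 => ->.
by case: eqP => [->|] //=; rewrite !mulrzr.
Qed.

Lemma omega3_omega : Y om 3 om = (6%:R / 12%:R * c) *: vac.
Proof. by have := @Lop_omega 2 isT. Qed.

Lemma omega_gt3_omega i : (0 < i)%N -> Y om (3 + i%:Z) om = 0.
Proof.
move=> i_gt0.
have -> : 3 + i%:Z = 2 + i%:Z + 1 by rewrite [RHS]addrAC.
rewrite -/(Lop Y om _ om) Lop_omega; last by rewrite ler_wpDr.
by rewrite -[X in _ == X]addr0 (inj_eq (addrI 2)) eqz_nat; case: i i_gt0.
Qed.

End VirasoroVector.

Theorem mainTheorem10 (R : realType) (V : lmodType R[i])
  (Y : V -> int -> V -> V) (vac om : V) (c : R[i]) :
  is_VOA Y vac om c -> c != 0 ->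
  (forall (W : lmodType R[i]) (YW : V -> int -> W -> W),
      is_weak_module Y vac YW -> forall w : W, in_g_ge0 YW w) /\
  (forall v : V, in_g_ge0 Y v).
Proof.
move=> VOA c_neq0.
have d_neq0 : 6%:R / 12%:R * c != 0 by rewrite !mulf_neq0 ?invr_eq0 ?pnatr_eq0.
have module_gen (W : lmodType R[i]) (YW : V -> int -> W -> W) :
    is_weak_module Y vac YW -> forall w : W, in_g_ge0 YW w.
  move=> WM w; rewrite -[w](scalerK d_neq0); apply: in_g_ge0Z.
  apply: (scale_in_g_ge0 (p := 3) WM); [exact: omega3_omega VOA | exact: omega_gt3_omega VOA].
by split => //; apply: module_gen; case: VOA.
Qed.
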